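(* Let $G$ be a finitely generated group and $H$ a finitely generated normal subgroup of $G$. Let $\Phi$ be a uniformly continuous action of $G$ on a metric space $\Omega$, and let $U,V\subset\Omega$. If the restricted action $\Phi|_{H}$ (of $H$ on $\Omega$) is topologically Anosov with respect to $(U,V)$, then $\Phi$ is topologically Anosov with respect to $(U,V)$.
   Context: Let $(\Omega,\mathrm{dist})$ be a metric space; $B(\delta,x)=\{y:\mathrm{dist}(x,y)<\delta\}$ and $B(\delta,U)=\bigcup_{x\in U}B(\delta,x)$. An action of a group $G$ is a map $\Phi:G\times\Omega\to\Omega$ such that each $f_g=\Phi(g,\cdot)$ is a homeomorphism of $\Omega$, $\Phi(e,x)=x$, and $\Phi(g_1g_2,x)=\Phi(g_1,\Phi(g_2,x))$. For a finitely generated $G$, the action is uniformly continuous if for some finite symmetric generating set $S$ (symmetric: $s\in S\Rightarrow s^{-1}\in S$) all maps $f_s$, $s\in S$, are uniformly continuous. Fix a finite symmetric generating set $S$ of $G$. For $d>0$, a family $\{y_g\}_{g\in G}\subset\Omega$ is a $d$-pseudotrajectory if $\mathrm{dist}(y_{sg},f_s(y_g))<d$ for all $s\in S$, $g\in G$. A uniformly continuous action has the shadowing property on $V\subset\Omega$ if for every $\varepsilon>0$ there is $d>0$ such that for every $d$-pseudotrajectory $\{y_g\}$ with all $y_g\in V$ there is $x_e\in\Omega$ with $\mathrm{dist}(y_g,f_g(x_e))<\varepsilon$ for all $g\in G$ (this property does not depend on the choice of $S$). The action is expansive on $U\subset\Omega$ if there is $\Delta>0$ such that whenever $x_1,x_2\in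 U$ satisfy $\Phi(g,x_1),\Phi(g,x_2)\in U$ and $\mathrm{dist}(\Phi(g,x_1),\Phi(g,x_2))<\Delta$ for all $g\in G$, then $x_1=x_2$. The action is topologically Anosov with respect to $(U,V)$ if (TA1) there is $\gamma>0$ with $B(\gamma,V)\subset U$, (TA2) it has the shadowing property on $V$, and (TA3) it is expansive on $U$. *)

From Stdlib Require Import Reals List.
Open Scope R_scope.

Definition is_group {G : Type} (mul : G -> G -> G) (inv : G -> G) (e : G) : Prop :=
  (forall a b c, mul a (mul b c) = mul (mul a b) c) /\
  (forall a, mul e a = a) /\ (forall a, mul a e = a) /\
  (forall a, mul (inv a) a = e) /\ (forall a, mul a (inv a) = e).

Definition is_subgroup {G : Type} (mul : G -> G -> G) (inv : G -> G) (e : G)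
  (K : G -> Prop) : Prop :=
  K e /\ (forall a b, K a -> K b -> K (mul a b)) /\ (forall a, K a -> K (inv a)).

Definition is_normal {G : Type} (mul : G -> G -> G) (inv : G -> G) (e : G)
  (K : G -> Prop) : Prop :=
  is_subgroup mul inv e K /\ forall g h, K h -> K (mul (mul g h) (inv g)).

Inductive gen {G : Type} (mul : G -> G -> G) (inv : G -> G) (e : G) (S : list G)
  : G -> Prop :=
| gen_e : gen mul inv e S e
| gen_s : forall s, In s S -> gen mul inv e S s
| gen_mul : forall a b, gen mul inv e S a -> gen mul inv e S b -> gen mul inv e S (mul a b)
| gen_inv : forall a, gen mul inv e S a -> gen mul inv e S (inv a).

Definition fin_sym_gen_set {G : Type} (mul : G -> G -> G) (inv : G -> G) (e : G)
  (K : G -> Prop) (S : list G) : Prop :=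
  (forall s, In s S -> K s) /\
  (forall s, In s S -> In (inv s) S) /\
  (forall g, K g -> gen mul inv e S g).

Definition finitely_generated {G : Type} (mul : G -> G -> G) (inv : G -> G) (e : G)
  (K : G -> Prop) : Prop :=
  exists S : list G, fin_sym_gen_set mul inv e K S.

Definition is_metric {X : Type} (dist : X -> X -> R) : Prop :=
  (forall x y, 0 <= dist x y) /\
  (forall x y, dist x y = 0 <-> x = y) /\
  (forall x y, dist x y = dist y x) /\
  (forall x y z, dist x z <= dist x y + dist y z).

Definition mcontinuous {X : Type} (dist : X -> X -> R) (f : X -> X) : Prop :=
  forall x eps, 0 < eps -> exists delta, 0 < delta /\
    forall y, dist x y < delta -> dist (f x) (f y) < eps.

Definition unif_continuous {X : Type} (dist : X -> X -> R) (f : X -> X) : Prop :=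
  forall eps, 0 < eps -> exists delta, 0 < delta /\
    forall x y, dist x y < delta -> dist (f x) (f y) < eps.

Definition homeomorphism {X : Type} (dist : X -> X -> R) (f : X -> X) : Prop :=
  mcontinuous dist f /\ exists h : X -> X, mcontinuous dist h /\
    (forall x, h (f x) = x) /\ (forall x, f (h x) = x).

Definition ball_set {X : Type} (dist : X -> X -> R) (delta : R) (U : X -> Prop) : X -> Prop :=
  fun y => exists x, U x /\ dist x y < delta.

(* ---------- actions, restricted to a subgroup K (K = fun _ => True for G) ---------- *)
Definition is_action {G X : Type} (mul : G -> G -> G) (e : G) (dist : X -> X -> R)
  (K : G -> Prop) (Phi : G -> X -> X) : Prop :=
  (forall g, K g -> homeomorphism dist (Phi g)) /\
  (forall x, Phi e x = x) /\
  (forall g1 g2 x, K g1 -> K g2 -> Phi (mul g1 g2) x = Phi g1 (Phi g2 x)).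

Definition unif_cont_action {G X : Type} (mul : G -> G -> G) (inv : G -> G) (e : G)
  (dist : X -> X -> R) (K : G -> Prop) (Phi : G -> X -> X) : Prop :=
  exists S, fin_sym_gen_set mul inv e K S /\
    forall s, In s S -> unif_continuous dist (Phi s).

Definition pseudotraj {G X : Type} (mul : G -> G -> G) (dist : X -> X -> R)
  (K : G -> Prop) (S : list G) (Phi : G -> X -> X) (d : R) (y : G -> X) : Prop :=
  forall s g, In s S -> K g -> dist (y (mul s g)) (Phi s (y g)) < d.

Definition shadowing_on {G X : Type} (mul : G -> G -> G) (dist : X -> X -> R)
  (K : G -> Prop) (S : list G) (Phi : G -> X -> X) (V : X -> Prop) : Prop :=
  forall eps, 0 < eps -> exists d, 0 < d /\
    forall y : G -> X, pseudotraj mul dist K S Phi d y ->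
      (forall g, K g -> V (y g)) ->
      exists x_e : X, forall g, K g -> dist (y g) (Phi g x_e) < eps.

Definition expansive_on {G X : Type} (dist : X -> X -> R)
  (K : G -> Prop) (Phi : G -> X -> X) (U : X -> Prop) : Prop :=
  exists Delta, 0 < Delta /\
    forall x1 x2, U x1 -> U x2 ->
      (forall g, K g -> U (Phi g x1) /\ U (Phi g x2) /\ dist (Phi g x1) (Phi g x2) < Delta) ->
      x1 = x2.

Definition top_anosov {G X : Type} (mul : G -> G -> G) (dist : X -> X -> R)
  (K : G -> Prop) (S : list G) (Phi : G -> X -> X) (U V : X -> Prop) : Prop :=
  (exists gamma, 0 < gamma /\ forall x, ball_set dist gamma V x -> U x) /\
  shadowing_on mul dist K S Phi V /\
  expansive_on dist K Phi U.

(* The ball condition (TA1) does not depend on the acting group, and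
   expansivity (TA3) only gets easier for a larger group.  The content is
   shadowing (TA2).  Let {y_g} be a fine G-pseudotrajectory in V.  For each
   k in G the "coset trajectory" h |-> y_{hk} is a fine H-pseudotrajectory
   (every H-generator is a word in the G-generators, and uniform continuity
   of the action controls such words), so it is shadowed by some point w_k.
   By H-expansivity such a shadow is unique, and since H is normal the point
   f_s(w_k) shadows the coset trajectory through sk; hence w_{sk} = f_s(w_k)
   for every generator s, and by induction w_g = f_g(w_e).  Then w_e
   shadows the whole of {y_g}. *)

From Stdlib Require Import Reals List Lra.
Open Scope R_scope.

Lemma common_positive_scale (A : Type) (P : A -> R -> Prop) (l : list A) :
  (forall a d d', 0 < d' -> d' <= d -> P a d -> P a d') ->
  (forall a, In a l -> exists d, 0 < d /\ P a d) ->
  exists d, 0 < d /\ forall a, In a l -> P a d.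
Proof.
  intros P_mono. induction l as [|a l IH]; intros P_pos.
  - exists 1; split; [lra | intros a []].
  - destruct (P_pos a (or_introl eq_refl)) as [da [da_pos Pa]].
    destruct IH as [dl [dl_pos Pl]]; [intros b hb; apply P_pos; right; exact hb |].
    assert (dmin_pos : 0 < Rmin da dl) by (apply Rmin_glb_lt; assumption).
    exists (Rmin da dl); split; [exact dmin_pos |].
    intros b [<- | hb].
    + exact (P_mono _ _ _ dmin_pos (Rmin_l _ _) Pa).
    + exact (P_mono _ _ _ dmin_pos (Rmin_r _ _) (Pl b hb)).
Qed.

Lemma expansive_on_larger {G X : Type} (dist : X -> X -> R)
    (K K' : G -> Prop) (Phi : G -> X -> X) (U : X -> Prop) :
  (forall g, K g -> K' g) -> expansive_on dist K Phi U -> expansive_on dist K' Phi U.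
Proof.
  intros KK' [Delta [Delta_pos expK]].
  exists Delta; split; [exact Delta_pos |].
  intros x1 x2 U1 U2 close. apply expK; auto.
Qed.

Section Development.

Context {G : Type} {mul : G -> G -> G} {inv : G -> G} {e : G}
  (hG : is_group mul inv e).

Lemma mul_assoc a b c : mul a (mul b c) = mul (mul a b) c.
Proof. apply hG. Qed.

Lemma mul_e_l a : mul e a = a.
Proof. apply hG. Qed.

Lemma mul_e_r a : mul a e = a.
Proof. apply hG. Qed.

Lemma mul_inv_l a : mul (inv a) a = e.
Proof. apply hG. Qed.

Lemma mul_inv_r a : mul a (inv a) = e.
Proof. apply hG. Qed.

Lemma inv_unique a b : mul a b = e -> a = inv b.
Proof.
  intro ab. rewrite <- (mul_e_r a), <- (mul_inv_r b), mul_assoc, ab, mul_e_l.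
  reflexivity.
Qed.

Lemma inv_involutive a : inv (inv a) = a.
Proof. symmetry; apply inv_unique, mul_inv_r. Qed.

Lemma inv_e : inv e = e.
Proof. symmetry; apply inv_unique, mul_e_l. Qed.

Lemma inv_mul a b : inv (mul a b) = mul (inv b) (inv a).
Proof.
  symmetry; apply inv_unique.
  rewrite <- mul_assoc, (mul_assoc (inv a)), mul_inv_l, mul_e_l, mul_inv_l.
  reflexivity.
Qed.

Lemma normal_conj_inv (K : G -> Prop) s h :
  is_normal mul inv e K -> K h -> K (mul (mul (inv s) h) s).
Proof.
  intros [_ K_normal] Kh. rewrite <- (inv_involutive s) at 2. apply K_normal, Kh.
Qed.

Context {X : Type} {dist : X -> X -> R} (hX : is_metric dist).

Lemma dist_refl x : dist x x = 0.
Proof. apply hX; reflexivity. Qed.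

Lemma dist_sym x y : dist x y = dist y x.
Proof. apply hX. Qed.

Lemma dist_triangle x y z : dist x z <= dist x y + dist y z.
Proof. apply hX. Qed.

Lemma unif_continuous_id : unif_continuous dist (fun x => x).
Proof. intros eps eps_pos; exists eps; split; auto. Qed.

Lemma unif_continuous_ext (f g : X -> X) :
  unif_continuous dist f -> (forall x, g x = f x) -> unif_continuous dist g.
Proof.
  intros f_uc fg eps eps_pos. destruct (f_uc eps eps_pos) as [d [d_pos fd]].
  exists d; split; [exact d_pos |]. intros x y xy. rewrite !fg; auto.
Qed.

Lemma unif_continuous_comp (f g : X -> X) :
  unif_continuous dist f -> unif_continuous dist g ->
  unif_continuous dist (fun x => f (g x)).
Proof.
  intros f_uc g_uc eps eps_pos. destruct (f_uc eps eps_pos) as [d [d_pos fd]].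
  destruct (g_uc d d_pos) as [d' [d'_pos gd']]. exists d'; split; auto.
Qed.

Context (Phi : G -> X -> X)
  (act_e : forall x, Phi e x = x)
  (act_mul : forall g1 g2 x, Phi (mul g1 g2) x = Phi g1 (Phi g2 x)).

Lemma gen_unif_continuous (S : list G) :
  (forall s, In s S -> In (inv s) S) ->
  (forall s, In s S -> unif_continuous dist (Phi s)) ->
  forall g, gen mul inv e S g ->
  unif_continuous dist (Phi g) /\ unif_continuous dist (Phi (inv g)).
Proof.
  intros S_sym S_uc g g_gen. induction g_gen as [| s s_in | a b _ [a_uc a'_uc] _ [b_uc b'_uc]
                                          | a _ [a_uc a'_uc]].
  - rewrite inv_e. split; exact (unif_continuous_ext _ _ unif_continuous_id act_e).
  - split; auto.
  - split.
    + exact (unif_continuous_ext _ _ (unif_continuous_comp _ _ a_uc b_uc) (act_mul a b)).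
    + rewrite inv_mul.
      exact (unif_continuous_ext _ _ (unif_continuous_comp _ _ b'_uc a'_uc) (act_mul _ _)).
  - rewrite inv_involutive. split; assumption.
Qed.

Lemma action_unif_continuous :
  unif_cont_action mul inv e dist (fun _ => True) Phi ->
  forall g, unif_continuous dist (Phi g).
Proof.
  intros [S [[_ [S_sym S_gen]] S_uc]] g.
  exact (proj1 (gen_unif_continuous S S_sym S_uc g (S_gen g I))).
Qed.

Lemma pseudotraj_mono (K : G -> Prop) S d d' (y : G -> X) :
  d' <= d -> pseudotraj mul dist K S Phi d' y -> pseudotraj mul dist K S Phi d y.
Proof. intros dd' y_pt s g s_in Kg. specialize (y_pt s g s_in Kg). lra. Qed.

Context (Phi_uc : forall g, unif_continuous dist (Phi g)).

(* Along a sufficiently fine G-pseudotrajectory, one step by a fixed element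
   g of the generated subgroup is as small as desired: g is a word in the
   generators and uniform continuity propagates the error of each letter. *)
Lemma pseudotraj_word_control (S : list G) g :
  gen mul inv e S g -> forall eta, 0 < eta -> exists del, 0 < del /\
  forall y, pseudotraj mul dist (fun _ => True) S Phi del y ->
  forall k, dist (y (mul g k)) (Phi g (y k)) < eta.
Proof.
  intro g_gen. induction g_gen as [| s s_in | a b _ IHa _ IHb | a _ IHa];
    intros eta eta_pos.
  - exists 1; split; [lra |]. intros y _ k. rewrite mul_e_l, act_e, dist_refl. exact eta_pos.
  - exists eta; split; [exact eta_pos |]. intros y y_pt k. exact (y_pt s k s_in I).
  - destruct (Phi_uc a (eta / 2)) as [da_uc [da_uc_pos a_uc]]; [lra |].
    destruct (IHa (eta / 2)) as [da [da_pos a_step]]; [lra |].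
    destruct (IHb da_uc da_uc_pos) as [db [db_pos b_step]].
    exists (Rmin da db); split; [apply Rmin_glb_lt; assumption |].
    intros y y_pt k.
    assert (step_a := a_step y (pseudotraj_mono _ _ _ _ _ (Rmin_l _ _) y_pt) (mul b k)).
    assert (step_b := a_uc _ _ (b_step y (pseudotraj_mono _ _ _ _ _ (Rmin_r _ _) y_pt) k)).
    rewrite <- mul_assoc, act_mul.
    pose proof (dist_triangle (y (mul a (mul b k))) (Phi a (y (mul b k)))
                              (Phi a (Phi b (y k)))).
    lra.
  - destruct (Phi_uc (inv a) eta eta_pos) as [d_uc [d_uc_pos a'_uc]].
    destruct (IHa d_uc d_uc_pos) as [da [da_pos a_step]].
    exists da; split; [exact da_pos |]. intros y y_pt k.
    (* apply the step of a at the point (inv a) k and pull it back by f_{inv a} *)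
    assert (back := a_step y y_pt (mul (inv a) k)).
    rewrite mul_assoc, mul_inv_r, mul_e_l, dist_sym in back.
    assert (pulled := a'_uc _ _ back).
    rewrite <- act_mul, mul_inv_l, act_e in pulled. exact pulled.
Qed.

Lemma coset_pseudotraj (K : G -> Prop) (SK SG : list G) :
  (forall t, In t SK -> gen mul inv e SG t) ->
  forall dK, 0 < dK -> exists d, 0 < d /\
  forall y, pseudotraj mul dist (fun _ => True) SG Phi d y ->
  forall k, pseudotraj mul dist K SK Phi dK (fun h => y (mul h k)).
Proof.
  intros SK_words dK dK_pos.
  destruct (common_positive_scale G
    (fun t d => forall y, pseudotraj mul dist (fun _ => True) SG Phi d y ->
                forall k, dist (y (mul t k)) (Phi t (y k)) < dK) SK)
    as [d [d_pos d_controls]].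
  - intros t d1 d2 _ d21 controls y y_pt.
    exact (controls y (pseudotraj_mono _ _ _ _ _ d21 y_pt)).
  - intros t t_in. exact (pseudotraj_word_control SG t (SK_words t t_in) dK dK_pos).
  - exists d; split; [exact d_pos |]. intros y y_pt k t h t_in _.
    rewrite <- mul_assoc. exact (d_controls t t_in y y_pt (mul h k)).
Qed.

Section CosetShadows.

Context (H : G -> Prop) (hH : is_normal mul inv e H) (U V : X -> Prop)
  (gamma Delta : R)
  (ball_in_U : forall x, ball_set dist gamma V x -> U x)
  (expansive : forall x1 x2, U x1 -> U x2 ->
     (forall g, H g -> U (Phi g x1) /\ U (Phi g x2) /\
                       dist (Phi g x1) (Phi g x2) < Delta) -> x1 = x2).

Context (y : G -> X) (y_in_V : forall g, V (y g)) (eps1 sig : R)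
  (eps1_gamma : eps1 <= gamma) (eps1_Delta : 2 * eps1 < Delta)
  (sig_eps1 : sig <= eps1).

Definition coset_shadow (k : G) (w : X) : Prop :=
  forall h, H h -> dist (y (mul h k)) (Phi h w) < sig.

Lemma near_coset_orbit_in_U k w :
  (forall h, H h -> dist (y (mul h k)) (Phi h w) < eps1) ->
  forall h, H h -> U (Phi h w).
Proof.
  intros near h Hh. apply ball_in_U. exists (y (mul h k)).
  split; [apply y_in_V |]. specialize (near h Hh). lra.
Qed.

Lemma coset_shadow_unique k w1 w2 :
  (forall h, H h -> dist (y (mul h k)) (Phi h w1) < eps1) ->
  coset_shadow k w2 -> w1 = w2.
Proof.
  intros near1 shadow2.
  assert (near2 : forall h, H h -> dist (y (mul h k)) (Phi h w2) < eps1)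
    by (intros h Hh; specialize (shadow2 h Hh); lra).
  assert (H_e : H e) by apply hH.
  pose proof (near_coset_orbit_in_U k w1 near1) as U1.
  pose proof (near_coset_orbit_in_U k w2 near2) as U2.
  apply expansive.
  - rewrite <- act_e. exact (U1 e H_e).
  - rewrite <- act_e. exact (U2 e H_e).
  - intros h Hh. split; [auto | split; [auto |]].
    pose proof (dist_triangle (Phi h w1) (y (mul h k)) (Phi h w2)) as tri.
    rewrite (dist_sym (Phi h w1) (y (mul h k))) in tri.
    specialize (near1 h Hh). specialize (near2 h Hh). lra.
Qed.

Context (SG : list G)
  (step_small : forall s k, In s SG -> dist (y (mul s k)) (Phi s (y k)) < eps1 / 2)
  (gen_cont : forall s a b, In s SG -> dist a b < sig ->
                            dist (Phi s a) (Phi s b) < eps1 / 2).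

(* Key step, using normality: h s = s h' with h' = s^-1 h s in H, so f_s
   carries a shadow of the coset through k to one of the coset through sk. *)
Lemma coset_shadow_generator s k w w' :
  In s SG -> coset_shadow k w -> coset_shadow (mul s k) w' -> w' = Phi s w.
Proof.
  intros s_in shadow shadow'. symmetry.
  apply (coset_shadow_unique (mul s k)); [| exact shadow'].
  intros h Hh.
  set (h' := mul (mul (inv s) h) s).
  assert (Hh' : H h') by exact (normal_conj_inv H s h hH Hh).
  assert (conj_eq : mul s h' = mul h s)
    by (unfold h'; rewrite !mul_assoc, mul_inv_r, mul_e_l; reflexivity).
  replace (mul h (mul s k)) with (mul s (mul h' k))
    by (rewrite !mul_assoc, conj_eq; reflexivity).
  replace (Phi h (Phi s w)) with (Phi s (Phi h' w))
    by (rewrite <- !act_mul, conj_eq; reflexivity).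
  pose proof (step_small s (mul h' k) s_in).
  pose proof (gen_cont s _ _ s_in (shadow h' Hh')).
  pose proof (dist_triangle (y (mul s (mul h' k))) (Phi s (y (mul h' k)))
                            (Phi s (Phi h' w))).
  lra.
Qed.

Context (shadow_exists : forall k, exists w, coset_shadow k w).

Lemma coset_shadow_equivariant g :
  gen mul inv e SG g ->
  forall k w w', coset_shadow k w -> coset_shadow (mul g k) w' -> w' = Phi g w.
Proof.
  intro g_gen. induction g_gen as [| s s_in | a b _ IHa _ IHb | a _ IHa];
    intros k w w' shadow shadow'.
  - rewrite act_e. rewrite mul_e_l in shadow'. symmetry.
    apply (coset_shadow_unique k); [| exact shadow'].
    intros h Hh. specialize (shadow h Hh). lra.
  - exact (coset_shadow_generator s k w w' s_in shadow shadow').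
  - destruct (shadow_exists (mul b k)) as [w'' shadow''].
    rewrite act_mul, <- (IHb k w w'' shadow shadow'').
    apply (IHa (mul b k)); [exact shadow'' | rewrite mul_assoc; exact shadow'].
  - assert (w_eq : w = Phi a w').
    { apply (IHa (mul (inv a) k)); [exact shadow' |].
      rewrite mul_assoc, mul_inv_r, mul_e_l. exact shadow. }
    rewrite w_eq, <- act_mul, mul_inv_l, act_e. reflexivity.
Qed.

Lemma shadow_from_cosets :
  (forall g, gen mul inv e SG g) ->
  exists xe, forall g, dist (y g) (Phi g xe) < sig.
Proof.
  intro SG_gen. destruct (shadow_exists e) as [xe shadow_e]. exists xe. intro g.
  destruct (shadow_exists g) as [w shadow_g].
  assert (w_eq : w = Phi g xe).
  { apply (coset_shadow_equivariant g (SG_gen g) e); [exact shadow_e |].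
    rewrite mul_e_r. exact shadow_g. }
  assert (H_e : H e) by apply hH.
  specialize (shadow_g e H_e). rewrite mul_e_l, act_e in shadow_g.
  rewrite <- w_eq. exact shadow_g.
Qed.

End CosetShadows.

Lemma shadowing_extends (H : G -> Prop) (hH : is_normal mul inv e H)
    (SH SG : list G) (SG_gen : forall g, gen mul inv e SG g) (U V : X -> Prop) :
  (exists gamma, 0 < gamma /\ forall x, ball_set dist gamma V x -> U x) ->
  shadowing_on mul dist H SH Phi V -> expansive_on dist H Phi U ->
  shadowing_on mul dist (fun _ => True) SG Phi V.
Proof.
  intros [gamma [gamma_pos ball_in_U]] shadowH [Delta [Delta_pos expH]] eps eps_pos.
  set (eps1 := Rmin eps (Rmin gamma (Delta / 3))).
  assert (eps1_pos : 0 < eps1) by (unfold eps1; repeat apply Rmin_glb_lt; lra).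
  assert (eps1_eps : eps1 <= eps) by apply Rmin_l.
  assert (eps1_gamma : eps1 <= gamma)
    by (eapply Rle_trans; [apply Rmin_r | apply Rmin_l]).
  assert (eps1_Delta : 2 * eps1 < Delta).
  { assert (eps1 <= Delta / 3) by (eapply Rle_trans; [apply Rmin_r | apply Rmin_r]).
    lra. }
  destruct (common_positive_scale G (fun s d => forall a b, dist a b < d ->
              dist (Phi s a) (Phi s b) < eps1 / 2) SG) as [s0 [s0_pos gen_cont]].
  { intros s d d' _ d'd cont a b ab. apply cont. lra. }
  { intros s _. destruct (Phi_uc s (eps1 / 2)) as [d [d_pos cont]]; [lra |].
    exists d; split; assumption. }
  set (sig := Rmin eps1 s0).
  assert (sig_pos : 0 < sig) by (apply Rmin_glb_lt; assumption).
  assert (sig_eps1 : sig <= eps1) by apply Rmin_l.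
  assert (sig_s0 : sig <= s0) by apply Rmin_r.
  destruct (shadowH sig sig_pos) as [dH [dH_pos shadowH_dH]].
  destruct (coset_pseudotraj H SH SG (fun t _ => SG_gen t) dH dH_pos)
    as [dd [dd_pos coset_pt]].
  exists (Rmin (eps1 / 2) dd); split; [apply Rmin_glb_lt; lra |].
  intros y y_pt y_in_V.
  assert (step_small : forall s k, In s SG -> dist (y (mul s k)) (Phi s (y k)) < eps1 / 2).
  { intros s k s_in. pose proof (y_pt s k s_in I). pose proof (Rmin_l (eps1 / 2) dd). lra. }
  assert (shadow_exists : forall k, exists w, coset_shadow H y sig k w).
  { intro k. apply (shadowH_dH (fun h => y (mul h k))).
    - exact (coset_pt y (pseudotraj_mono _ _ _ _ _ (Rmin_r _ _) y_pt) k).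
    - intros h _. exact (y_in_V _ I). }
  destruct (shadow_from_cosets H hH U V gamma Delta ball_in_U expH
              y (fun g => y_in_V g I) eps1 sig eps1_gamma eps1_Delta sig_eps1 SG
              step_small
              (fun s a b s_in ab => gen_cont s s_in a b (Rlt_le_trans _ _ _ ab sig_s0))
              shadow_exists SG_gen) as [xe xe_shadows].
  exists xe. intros g _. specialize (xe_shadows g). lra.
Qed.

End Development.

Theorem lemma1
  (G : Type) (mul : G -> G -> G) (inv : G -> G) (e : G)
  (hG : is_group mul inv e)
  (H : G -> Prop) (hH : is_normal mul inv e H)
  (X : Type) (dist : X -> X -> R) (hX : is_metric dist)
  (Phi : G -> X -> X)
  (hPhi : is_action mul e dist (fun _ => True) Phi)
  (hunif : unif_cont_action mul inv e dist (fun _ => True) Phi)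
  (SG : list G) (hSG : fin_sym_gen_set mul inv e (fun _ => True) SG)
  (SH : list G) (hSH : fin_sym_gen_set mul inv e H SH)
  (U V : X -> Prop)
  (hTA : top_anosov mul dist H SH Phi U V) :
  top_anosov mul dist (fun _ => True) SG Phi U V.
Proof.
  destruct hPhi as [_ [act_e act_mul]].
  assert (act_mul' : forall g1 g2 x, Phi (mul g1 g2) x = Phi g1 (Phi g2 x))
    by (intros; apply act_mul; exact I).
  pose proof (action_unif_continuous hG Phi act_e act_mul' hunif) as Phi_uc.
  destruct hSG as [_ [_ SG_gen]].
  destruct hTA as [ball_in_U [shadowH expH]].
  split; [exact ball_in_U | split].
  - exact (shadowing_extends hG hX Phi act_e act_mul' Phi_uc H hH SH SG
             (fun g => SG_gen g I) U V ball_in_U shadowH expH).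
  - exact (expansive_on_larger dist H (fun _ => True) Phi U (fun _ _ => I) expH).
Qed.
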